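(* For $\alpha_1,\alpha_2\in\mathbf{C}$, the superalgebras $B_{2,\alpha_1}$ and $B_{2,\alpha_2}$ are isomorphic if and only if $\alpha_1=\alpha_2$.
   Context: Isomorphisms are even bijective linear maps preserving the product. For $\alpha\in\mathbf{C}$, put $\beta=1+\alpha$, $\gamma=1-\alpha$. $B_{2,\alpha}$ is the superalgebra on the superspace with ordered basis $(x_1,x_2,x_3,x_4,y_1,y_2,y_3,y_4)$ ($x_i$ even, $y_j$ odd) given by left multiplication matrices $L(a)$, whose $j$-th column is the coordinate vector of $a\cdot(\text{$j$-th basis vector})$. Write $L(a)=\begin{pmatrix}P&Q\\R&S\end{pmatrix}$ with $4\times4$ blocks; for $a=x_i$, $Q=R=0$; for $a=y_j$, $P=S=0$. Rows separated by semicolons: $L(x_1)$: $P=[0,0,-1,\beta;0,0,0,0;0,\beta/2,0,0;0,\tfrac12,0,0]$, $S=0$. $L(x_2)$: $P=[0,0,0,0;0,0,1,\gamma;-\gamma/2,0,0,0;\tfrac12,0,0,0]$, $S=0$. $L(x_3)$: $P=[1,0,0,0;0,-1,0,0;0,0,\alpha,\beta\gamma;0,0,1,-\alpha]$, $S=0$. $L(x_4)$: $P=[\beta,0,0,0;0,\gamma,0,0;0,0,\beta\gamma,-\alpha\beta\gamma;0,0,-\alpha,1+\alpha^2]$, $S=\mathrm{diag}(2-\alpha,2+\alpha,\alpha,-\alpha)$. $L(y_1)$: $Q=[0,0,0,0;0,0,0,\alpha\beta/4;0,0,-\alpha\gamma/4,0;0,0,\alpha/4,0]$, $R=[0,0,1,\gamma;1,0,0,0;0,0,0,0;0,0,0,0]$.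 $L(y_2)$: $Q=[0,0,-\alpha/2,0;0,0,0,0;0,0,0,-\alpha\beta/4;0,0,0,-\alpha/4]$, $R=[0,1,0,0;0,0,-1,\beta;0,0,0,0;0,0,0,0]$. $L(y_3)$: $Q=[0,1+\alpha/2,0,0;0,0,0,0;(\alpha\gamma+2)/4,0,0,0;(2-\alpha)/4,0,0,0]$, $R=[0,0,0,0;0,0,0,0;0,0,-1,\beta;0,-1,0,0]$. $L(y_4)$: $Q=[0,0,0,0;1-\alpha\beta/4,0,0,0;0,(\alpha\beta-2)/4,0,0;0,(\alpha+2)/4,0,0]$, $R=[0,0,0,0;0,0,0,0;-1,0,0,0;0,0,1,\gamma]$. *)

From HB Require Import structures.
From mathcomp Require Import all_boot all_order all_algebra.
From mathcomp Require Import complex.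
From mathcomp Require Import Rstruct.
Set Implicit Arguments. Unset Strict Implicit. Unset Printing Implicit Defensive.
Import Order.TTheory GRing.Theory Num.Theory.
Local Open Scope ring_scope.

Definition CC : Type := complex Rdefinitions.R.
HB.instance Definition _ := GRing.Field.on CC.

Definition ent (s : seq (seq CC)) (i j : nat) : CC := nth 0 (nth [::] s i) j.

Definition blk (P Q R S : seq (seq CC)) : 'M[CC]_8 :=
  \matrix_(i < 8, j < 8)
    if (i < 4)%N then (if (j < 4)%N then ent P i j else ent Q i (j - 4))
    else (if (j < 4)%N then ent R (i - 4) j else ent S (i - 4) (j - 4)).

Definition Z4 : seq (seq CC) := [:: [:: 0;0;0;0]; [:: 0;0;0;0]; [:: 0;0;0;0]; [:: 0;0;0;0]].

(* Left multiplication matrices L(e_k) of B_{2,alpha}; column j of L(a)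
   is the coordinate vector of a * (j-th basis vector).
   Basis order: x1,x2,x3,x4 (even), y1,y2,y3,y4 (odd). *)
Definition Lmat (a : CC) (k : 'I_8) : 'M[CC]_8 :=
  let b := 1 + a in let g := 1 - a in
  match val k with
  | 0 => blk [:: [:: 0; 0; -1; b]; [:: 0;0;0;0]; [:: 0; b/2; 0; 0]; [:: 0; 1/2; 0; 0]] Z4 Z4 Z4
  | 1 => blk [:: [:: 0;0;0;0]; [:: 0; 0; 1; g]; [:: -g/2; 0; 0; 0]; [:: 1/2; 0; 0; 0]] Z4 Z4 Z4
  | 2 => blk [:: [:: 1;0;0;0]; [:: 0;-1;0;0]; [:: 0;0;a;b*g]; [:: 0;0;1;-a]] Z4 Z4 Z4
  | 3 => blk [:: [:: b;0;0;0]; [:: 0;g;0;0]; [:: 0;0;b*g;-(a*b*g)]; [:: 0;0;-a;1+a^+2]] Z4 Z4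
             [:: [:: 2-a;0;0;0]; [:: 0;2+a;0;0]; [:: 0;0;a;0]; [:: 0;0;0;-a]]
  | 4 => blk Z4
             [:: [:: 0;0;0;0]; [:: 0;0;0;a*b/4]; [:: 0;0;-(a*g)/4;0]; [:: 0;0;a/4;0]]
             [:: [:: 0;0;1;g]; [:: 1;0;0;0]; [:: 0;0;0;0]; [:: 0;0;0;0]] Z4
  | 5 => blk Z4
             [:: [:: 0;0;-a/2;0]; [:: 0;0;0;0]; [:: 0;0;0;-(a*b)/4]; [:: 0;0;0;-a/4]]
             [:: [:: 0;1;0;0]; [:: 0;0;-1;b]; [:: 0;0;0;0]; [:: 0;0;0;0]] Z4
  | 6 => blk Z4
             [:: [:: 0;1+a/2;0;0]; [:: 0;0;0;0]; [:: (a*g+2)/4;0;0;0]; [:: (2-a)/4;0;0;0]]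
             [:: [:: 0;0;0;0]; [:: 0;0;0;0]; [:: 0;0;-1;b]; [:: 0;-1;0;0]] Z4
  | _ => blk Z4
             [:: [:: 0;0;0;0]; [:: 1-a*b/4;0;0;0]; [:: 0;(a*b-2)/4;0;0]; [:: 0;(a+2)/4;0;0]]
             [:: [:: 0;0;0;0]; [:: 0;0;0;0]; [:: -1;0;0;0]; [:: 0;0;1;g]] Z4
  end.

Definition Bmul (a : CC) (u v : 'cV[CC]_8) : 'cV[CC]_8 :=
  \sum_(k < 8) u k 0 *: (Lmat a k *m v).

(* Even coordinates are indices 0..3, odd ones 4..7. *)
Definition is_even_mx (f : 'M[CC]_8) : Prop :=
  forall i j : 'I_8, (i < 4)%N != (j < 4)%N -> f i j = 0.

Definition B2_iso (a1 a2 : CC) (f : 'M[CC]_8) : Prop :=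
  [/\ f \in unitmx, is_even_mx f &
      forall u v : 'cV[CC]_8, f *m Bmul a1 u v = Bmul a2 (f *m u) (f *m v)].

Definition B2_isomorphic (a1 a2 : CC) : Prop := exists f, B2_iso a1 a2 f.

(* Write e = alpha x3 + x4 ([rone alpha]).  It is a right identity of
   B_{2,alpha}, and conversely an even w with x3 w = x3 must equal e; hence
   every isomorphism f : B_{2,a} -> B_{2,b} maps e to e and intertwines the
   left multiplications by e.  Left multiplication by e is diagonal in the
   standard basis, with eigenvalues 1 + 2 alpha, 1 - 2 alpha, 1, 1 on x1..x4
   and 2 - alpha, 2 + alpha, alpha, -alpha on y1..y4, so f maps each basis
   vector into the eigenspace of the same eigenvalue.  Since f is invertible,
   x1 has an image and a preimage; comparing eigenvalues gives b = a or
   b = -a.  For b = -a with a <> 0 the eigenvalue condition leaves f so sparse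
   that the product rule f(u v) = f(u) f(v) on the pairs (y2, y3), (y3, y2)
   forces a = -1, and on (y1, y4), (y4, y1) forces a = 1. *)

From mathcomp Require Import all_boot all_order all_algebra ring complex Rstruct.
Import Order.TTheory GRing.Theory Num.Theory.
Set Implicit Arguments. Unset Strict Implicit. Unset Printing Implicit Defensive.
Local Open Scope ring_scope.

Notation ord8 n := (@Ordinal 8 n erefl).
Notation x1 := (ord8 0). Notation x2 := (ord8 1).
Notation x3 := (ord8 2). Notation x4 := (ord8 3).
Notation y1 := (ord8 4). Notation y2 := (ord8 5).
Notation y3 := (ord8 6). Notation y4 := (ord8 7).

Lemma ord8_ind (P : 'I_8 -> Prop) :
  P (ord8 0) -> P (ord8 1) -> P (ord8 2) -> P (ord8 3) ->
  P (ord8 4) -> P (ord8 5) -> P (ord8 6) -> P (ord8 7) -> forall i, P i.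
Proof.
move=> P0 P1 P2 P3 P4 P5 P6 P7.
by case=> [[|[|[|[|[|[|[|[|//]]]]]]]] ilt]; rewrite (bool_irrelevance ilt erefl).
Qed.

Lemma sum_ord8 (V : nmodType) (F : 'I_8 -> V) : \sum_(k < 8) F k =
  F (ord8 0) + F (ord8 1) + F (ord8 2) + F (ord8 3) +
  F (ord8 4) + F (ord8 5) + F (ord8 6) + F (ord8 7).
Proof.
rewrite !big_ord_recr big_ord0 /= add0r.
by repeat congr (_ + _); congr F; apply/val_inj.
Qed.

Lemma unitmx_col_neq0 (R : comUnitRingType) n (A : 'M[R]_n) j :
  A \in unitmx -> exists i, A i j != 0.
Proof.
move=> Aunit; apply/existsP; apply: contraLR Aunit; rewrite negb_exists => /forallP A0.
rewrite unitmxE (expand_det_col _ j) big1 ?unitr0 // => i _.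
by move/negPn/eqP: (A0 i) => ->; rewrite mul0r.
Qed.

Lemma unitmx_row_neq0 (R : comUnitRingType) n (A : 'M[R]_n) i :
  A \in unitmx -> exists j, A i j != 0.
Proof.
move=> Aunit; apply/existsP; apply: contraLR Aunit; rewrite negb_exists => /forallP A0.
rewrite unitmxE (expand_det_row _ i) big1 ?unitr0 // => j _.
by move/negPn/eqP: (A0 j) => ->; rewrite mul0r.
Qed.

(* [blk] builds a (locked) matrix; [blkf] is its entry function, which
   [simpl] evaluates on concrete indices. *)
Definition blkf (P Q R S : seq (seq CC)) (i j : nat) : CC :=
  if (i < 4)%N then (if (j < 4)%N then ent P i j else ent Q i (j - 4))
  else (if (j < 4)%N then ent R (i - 4) j else ent S (i - 4) (j - 4)).

Lemma blkE P Q R S (i j : 'I_8) : blk P Q R S i j = blkf P Q R S i j.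
Proof. by rewrite mxE. Qed.

Definition weight (a : CC) (i : nat) : CC :=
  match i with
  | 0 => 1 + 2 * a | 1 => 1 - 2 * a | 2 | 3 => 1
  | 4 => 2 - a | 5 => 2 + a | 6 => a | _ => - a
  end.

Definition rone (a : CC) : 'cV[CC]_8 :=
  \col_i (if val i == 2%N then a else if val i == 3%N then 1 else 0).

Lemma Lmat_rone a (k i : 'I_8) : Lmat a k i x3 * a + Lmat a k i x4 = (k == i)%:R.
Proof. by elim/ord8_ind: k; elim/ord8_ind: i; rewrite /Lmat !blkE /blkf /ent /=; ring. Qed.

Lemma Lmat_rone_diag a (m j : 'I_8) :
  a * Lmat a x3 m j + Lmat a x4 m j = (m == j)%:R * weight a j.
Proof. by elim/ord8_ind: m; elim/ord8_ind: j; rewrite /Lmat !blkE /blkf /ent /=; ring. Qed.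

Lemma Bmul_entry a (u v : 'cV[CC]_8) i :
  Bmul a u v i 0 = \sum_k \sum_l u k 0 * Lmat a k i l * v l 0.
Proof.
rewrite /Bmul summxE; apply: eq_bigr => k _.
by rewrite !mxE big_distrr; apply: eq_bigr => l _ /=; rewrite mulrA.
Qed.

Lemma Bmul_deltal a (p : 'I_8) (v : 'cV[CC]_8) :
  Bmul a (delta_mx p 0) v = Lmat a p *m v.
Proof.
rewrite /Bmul (bigD1 p) //= big1 => [|k /negbTE kp]; last by rewrite mxE kp scale0r.
by rewrite mxE !eqxx scale1r addr0.
Qed.

Lemma Bmul_delta a (p q m : 'I_8) :
  Bmul a (delta_mx p 0) (delta_mx q 0) m 0 = Lmat a p m q.
Proof. by rewrite Bmul_deltal -colE mxE. Qed.

Lemma sum_mul_rone a (F : 'I_8 -> CC) :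
  \sum_l F l * rone a l 0 = F x3 * a + F x4.
Proof. by rewrite sum_ord8 !mxE /=; ring. Qed.

Lemma sum_rone_mul a (F : 'I_8 -> CC) :
  \sum_k rone a k 0 * F k = a * F x3 + F x4.
Proof. by rewrite sum_ord8 !mxE /=; ring. Qed.

Lemma Bmulr1 a (u : 'cV[CC]_8) : Bmul a u (rone a) = u.
Proof.
apply/matrixP => i j; rewrite (ord1 j) Bmul_entry.
under eq_bigr => k _ do under eq_bigr => l _ do rewrite -mulrA.
under eq_bigr => k _ do rewrite -big_distrr sum_mul_rone Lmat_rone.
by rewrite (bigD1 i) //= eqxx mulr1 big1 ?addr0 // => k /negbTE ->; rewrite mulr0.
Qed.

Lemma Bmul1r_entry a (v : 'cV[CC]_8) i : Bmul a (rone a) v i 0 = weight a i * v i 0.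
Proof.
rewrite Bmul_entry exchange_big /=.
under eq_bigr => l _ do rewrite -big_distrl sum_rone_mul Lmat_rone_diag.
rewrite (bigD1 i) //= eqxx mul1r big1 ?addr0 // => l.
by rewrite eq_sym => /negbTE ->; rewrite !mul0r.
Qed.

Lemma blk_mulmx_entry P Q R S n (A : 'M[CC]_(8, n)) i j :
  (blk P Q R S *m A) i j = \sum_l A l j * blkf P Q R S i l.
Proof. by rewrite mxE; apply: eq_bigr => l _; rewrite blkE mulrC. Qed.

Lemma rone_unique b (w : 'cV[CC]_8) :
  (forall i : 'I_8, (4 <= i)%N -> w i 0 = 0) ->
  Bmul b (delta_mx x3 0) w = delta_mx x3 0 -> w = rone b.
Proof.
rewrite Bmul_deltal /Lmat /= => w_odd /matrixP x3w.
have := x3w x1 0; have := x3w x2 0; have := x3w x3 0; have := x3w x4 0.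
rewrite !blk_mulmx_entry !sum_ord8 !mxE /blkf /ent /= !mulr0 !addr0 !add0r !mulr1.
move=> /eqP; rewrite mulrN subr_eq0 => /eqP w2; rewrite w2 => w3_eq.
move=> /eqP; rewrite mulrN1 oppr_eq0 => /eqP w1 w0.
have w3 : w x4 0 = 1 by apply: etrans w3_eq; ring.
apply/matrixP => i j; rewrite (ord1 j) mxE.
by elim/ord8_ind: i => //=; [rewrite w2 w3 mul1r | apply: w_odd ..].
Qed.

Section Iso.
Variables (a b : CC) (f : 'M[CC]_8).
Hypothesis fiso : B2_iso a b f.

Lemma iso_Lmat p : f *m Lmat a p = \sum_k f k p *: (Lmat b k *m f).
Proof.
have [_ _ fmul] := fiso; apply/matrixP => i q.
have := congr1 (fun M : 'cV[CC]_8 => M i 0) (fmul (delta_mx p 0) (delta_mx q 0)).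
rewrite -!colE Bmul_entry !mxE summxE.
under eq_bigr do rewrite Bmul_delta.
move=> ->; apply: eq_bigr => k _; rewrite !mxE big_distrr; apply: eq_bigr => l _.
by rewrite !mxE /= mulrA.
Qed.

Lemma iso_rone : f *m rone a = rone b.
Proof.
have [funit feven fmul] := fiso.
apply: rone_unique => [i i_odd | ].
  by rewrite mxE sum_mul_rone !feven ?mul0r ?addr0 //= ltnNge i_odd.
have fx3 : f *m (invmx f *m delta_mx x3 0) = delta_mx x3 (0 : 'I_1).
  by rewrite mulmxA mulmxV // mul1mx.
by rewrite -{1}fx3 -fmul Bmulr1 fx3.
Qed.

Lemma iso_weight (i j : 'I_8) : weight a j != weight b i -> f i j = 0.
Proof.
have [_ _ fmul] := fiso.
have := congr1 (fun M : 'cV[CC]_8 => M i 0) (fmul (rone a) (delta_mx j 0)).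
rewrite iso_rone Bmul1r_entry -colE !mxE (bigD1 j) //= big1 => [|m /negbTE mj]; last first.
  by rewrite Bmul1r_entry mxE mj /= !mulr0.
rewrite Bmul1r_entry mxE !eqxx mulr1 addr0 mulrC => /eqP + wij.
by rewrite -subr_eq0 -mulrBl mulf_eq0 subr_eq0 (negbTE wij) => /eqP.
Qed.

Lemma iso_weight_col (j : 'I_8) :
  exists2 i : 'I_8, (i < 4)%N = (j < 4)%N & weight b i = weight a j.
Proof.
have [funit feven _] := fiso; have [i fij] := unitmx_col_neq0 j funit.
exists i; first by apply: contraTeq fij => /feven ->; rewrite eqxx.
by apply: contraTeq fij; rewrite eq_sym => /iso_weight ->; rewrite eqxx.
Qed.

Lemma iso_weight_row (i : 'I_8) :
  exists2 j : 'I_8, (j < 4)%N = (i < 4)%N & weight a j = weight b i.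
Proof.
have [funit feven _] := fiso; have [j fij] := unitmx_row_neq0 i funit.
exists j; first by apply: contraTeq fij; rewrite eq_sym => /feven ->; rewrite eqxx.
by apply: contraTeq fij => /iso_weight ->; rewrite eqxx.
Qed.

End Iso.

Lemma addr2I (x y z : CC) : x + 2 * y = x + 2 * z -> y = z.
Proof.
by move/addrI/eqP; rewrite -subr_eq0 -mulrBr mulf_eq0 pnatr_eq0 subr_eq0 => /eqP.
Qed.

Lemma lincomb2_eq (x y l1 r1 l2 r2 c1 c2 : CC) : l1 = r1 -> l2 = r2 ->
  x - y = c1 * (l1 - r1) + c2 * (l2 - r2) -> x = y.
Proof. by move=> -> ->; rewrite !subrr !mulr0 addr0 => /eqP; rewrite subr_eq0 => /eqP. Qed.

Lemma iso_eq_or_opp a b f : B2_iso a b f -> b = a \/ b = - a.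
Proof.
move=> fiso.
have a_cases : [\/ b = a, b = - a | a = 0].
  have [i i_even] := iso_weight_col fiso x1.
  elim/ord8_ind: i i_even => //= _ h; [constructor 1 | constructor 2 | constructor 3 ..].
  - exact: addr2I h.
  - by apply: oppr_inj; apply: (@addr2I 1); rewrite opprK mulrN h.
  - by apply: (@addr2I 1); rewrite mulr0 addr0 -h.
  - by apply: (@addr2I 1); rewrite mulr0 addr0 -h.
have b_cases : [\/ b = a, b = - a | b = 0].
  have [j j_even] := iso_weight_row fiso x1.
  elim/ord8_ind: j j_even => //= _ h; [constructor 1 | constructor 2 | constructor 3 ..].
  - by apply: (@addr2I 1); rewrite h.
  - by apply: (@addr2I 1); rewrite mulrN h.
  - by apply: (@addr2I 1); rewrite mulr0 addr0 -h.
  - by apply: (@addr2I 1); rewrite mulr0 addr0 -h.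
case: a_cases => [-> | -> | a0]; [by left | by right | ].
by case: b_cases => ->; rewrite ?a0 ?oppr0; left.
Qed.

(* The entries (i, j) allowed by [iso_weight] for an isomorphism
   B_{2,a} -> B_{2,-a} with a <> 0; the last four pairs only when a = 1 or
   a = -1. *)
Definition opp_supp (i j : 'I_8) : bool :=
  (val i, val j) \in [:: (1, 0); (0, 1); (2, 2); (2, 3); (3, 2); (3, 3);
    (5, 4); (7, 4); (4, 5); (6, 5); (5, 6); (7, 6); (4, 7); (6, 7)]%N.

Ltac lin_neq0 a := match goal with |- is_true (?d != 0) =>
  first [ have -> : d = 2 * a by ring | have -> : d = - (2 * a) by ring
        | have -> : d = 4 * a by ring | have -> : d = - (4 * a) by ring
        | have -> : d = 2 by ring | have -> : d = - 2 by ring ] end;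
  rewrite ?oppr_eq0 ?mulf_neq0 ?pnatr_eq0.

Section OppIso.
Variables (a : CC) (f : 'M[CC]_8).
Hypotheses (a_neq0 : a != 0) (fiso : B2_iso a (- a) f).

Lemma opp_iso_supp i j : ~~ opp_supp i j -> f i j = 0.
Proof.
have [_ feven _] := fiso.
elim/ord8_ind: i; elim/ord8_ind: j => //= _.
all: try by apply: feven.
all: by apply: (iso_weight fiso); rewrite /= -subr_eq0; lin_neq0 a.
Qed.

Lemma sum_opp_row i (G : 'I_8 -> CC) :
  \sum_m f i m * G m = \sum_(m | opp_supp i m) f i m * G m.
Proof. by rewrite [RHS]big_rmcond // => m /opp_iso_supp ->; rewrite mul0r. Qed.

Lemma sum_opp_col p (G : 'I_8 -> CC) :
  \sum_k f k p * G k = \sum_(k | opp_supp k p) f k p * G k.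
Proof. by rewrite [RHS]big_rmcond // => k /opp_iso_supp ->; rewrite mul0r. Qed.

Lemma opp_iso_eqn p q i :
  \sum_(m | opp_supp i m) f i m * Lmat a p m q =
  \sum_(k | opp_supp k p) f k p * \sum_(l | opp_supp l q) f l q * Lmat (- a) k i l.
Proof.
rewrite -sum_opp_row -sum_opp_col.
have /matrixP/(_ i q) := iso_Lmat fiso p; rewrite !mxE summxE => ->.
apply: eq_bigr => k _; rewrite !mxE -sum_opp_col; congr (_ * _).
by apply: eq_bigr => l _; rewrite mulrC.
Qed.

(* Pushes onto the goal the i-th coordinate of f(p q) = f(p) f(q), with the
   entries of f outside [opp_supp] dropped and the structure constants
   evaluated. *)
Tactic Notation "opp_eqn" constr(p) constr(q) constr(i) :=
  have := opp_iso_eqn p q i;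
  rewrite big_mkcond [RHS]big_mkcond !sum_ord8 /=;
  rewrite !(big_mkcond (fun l => opp_supp l q)) !sum_ord8 /=;
  rewrite /Lmat /= !blkE /blkf /ent /= ?mulr0 ?mul0r ?addr0 ?add0r.

Lemma opp_iso_neq0 i j : (forall k, opp_supp k j -> k = i) -> f i j != 0.
Proof.
move=> supp_j; have [funit _ _] := fiso; have [k fkj] := unitmx_col_neq0 j funit.
suff /supp_j <- : opp_supp k j by [].
by apply: contraTT fkj => /opp_iso_supp ->; rewrite eqxx.
Qed.

Lemma opp_iso_eqN1 : a = - 1.
Proof.
have fx2x1 : f x2 x1 != 0 by apply: opp_iso_neq0; elim/ord8_ind.
opp_eqn y2 y3 x2; move=> E1; opp_eqn y3 y2 x2; move=> E2.
(* Eliminate the product [f y4 y3 * f y1 y2] between the two equations. *)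
have : f x2 x1 * (a * (1 + a)) = 0.
  by apply: (lincomb2_eq E1 E2 (c1 := - (4 + a * (1 - a))) (c2 := - (a * (1 - a)))); field.
by move/eqP; rewrite !mulf_eq0 (negbTE fx2x1) (negbTE a_neq0) /= addrC addr_eq0 => /eqP.
Qed.

Lemma opp_iso_eq1 : a = 1.
Proof.
have fx1x2 : f x1 x2 != 0 by apply: opp_iso_neq0; elim/ord8_ind.
opp_eqn y4 y1 x1; move=> E1; opp_eqn y1 y4 x1; move=> E2.
(* Eliminate the product [f y3 y4 * f y2 y1] between the two equations. *)
have : f x1 x2 * (a * (1 - a)) = 0.
  by apply: (lincomb2_eq E1 E2 (c1 := 2 * a) (c2 := - (4 - 2 * a))); field.
by move/eqP; rewrite !mulf_eq0 (negbTE fx1x2) (negbTE a_neq0) /= subr_eq0 eq_sym => /eqP.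
Qed.
End OppIso.

Lemma B2_iso_opp a f : a != 0 -> ~ B2_iso a (- a) f.
Proof.
move=> a_neq0 fiso; have := opp_iso_eq1 a_neq0 fiso.
by rewrite (opp_iso_eqN1 a_neq0 fiso) => /eqP; rewrite eq_sym -addr_eq0 -mulr2n pnatr_eq0.
Qed.

Lemma B2_iso_refl a : B2_iso a a 1%:M.
Proof.
split=> [|i j ij|u v]; [exact: unitmx1 | | by rewrite !mul1mx].
rewrite mxE; have [ij_eq | //] := eqVneq i j.
by rewrite ij_eq eqxx in ij.
Qed.

Theorem lemma3p5 (a1 a2 : CC) : B2_isomorphic a1 a2 <-> a1 = a2.
Proof.
split=> [[f fiso] | <-]; last by exists 1%:M; exact: B2_iso_refl.
have [-> // | a2_opp] := iso_eq_or_opp fiso.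
have [a1_0 | a1_neq0] := eqVneq a1 0; first by rewrite a2_opp a1_0 oppr0.
by rewrite a2_opp in fiso; case: (B2_iso_opp a1_neq0 fiso).
Qed.
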